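(* Let $e\in\mathbb{Z}/2$, $n\in2\mathbb{N}$, and let $\Delta\in\mathfrak{A}^n$ satisfy $n^\Delta_{-\lambda}=n^\Delta_\lambda$ and $n^\Delta_{\lambda^q}=n^\Delta_\lambda$ for all $\lambda\in k^*$. Then ${}^ej_\Delta=n(q-(-1)^e)/4\in\mathbb{Z}/2$.
   Context: $k$ is an algebraic closure of $\mathbb{F}_q$, $q$ odd; $k^\triangle=k\setminus\{0,1,-1\}$. Permutations of $k^\triangle$: $\alpha(\lambda)=\lambda^{-1}$, $\beta(\lambda)=-\lambda$, $\gamma(\lambda)=\lambda^q$, $\gamma_e=\beta^e\gamma$. $\Omega_{\alpha,\gamma_e}$ is the set of orbits on $k^\triangle$ of the group generated by $\alpha,\gamma_e$, and $\Omega'_{\alpha,\gamma_e}$ the set of those orbits that are a single $\gamma_e$-orbit. For monic $\Delta\in k[X]$ with $\Delta(0)\ne0$ write $\Delta=\prod_{\lambda\in k^*}(X-\lambda)^{n^\Delta_\lambda}$. $\mathfrak{A}^n$ is the set of such $\Delta$ of degree $n$ with $n^\Delta_{\lambda^{-1}}=n^\Delta_\lambda$ for all $\lambda$ and $n^\Delta_1,n^\Delta_{-1}$ even. When $\lambda\mapsto n^\Delta_\lambda$ is constant on each $\mathcal{O}\in\Omega_{\alpha,\gamma_e}$ (with value $n^\Delta_{\mathcal{O}}$), set ${}^ej_\Delta=\sum_{\mathcal{O}\in\Omega'_{\alpha,\gamma_e}}n^\Delta_{\mathcal{O}}\in\mathbb{Z}/2$. *)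

From Stdlib Require Import Relations.
From HB Require Import structures.
From mathcomp Require Import all_boot all_order all_algebra.
Set Implicit Arguments. Unset Strict Implicit. Unset Printing Implicit Defensive.
Import GRing.Theory.
Local Open Scope ring_scope.

Section Defs.
Variable k : closedFieldType.

Definition ktri (x : k) : Prop := [/\ x != 0, x != 1 & x != -1].

(* gamma_e (lambda) = beta^e (gamma lambda) = (-1)^e * lambda^q ; e : bool = Z/2 *)
Definition gam (q : nat) (e : bool) (x : k) : k := (-1) ^+ e * x ^+ q.

(* orbit relation of the group generated by alpha (inversion) and gamma_e:
   the equivalence relation generated by x ~ alpha x and x ~ gamma_e x *)
Definition orbAG (q : nat) (e : bool) : relation k :=
  clos_refl_sym_trans k (fun a b => b = a^-1 \/ b = gam q e a).

Definition orbG (q : nat) (e : bool) : relation k :=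
  clos_refl_sym_trans k (fun a b => b = gam q e a).

(* the <alpha,gamma_e>-orbit of x is a single gamma_e-orbit (i.e. lies in Omega') *)
Definition single_orbit (q : nat) (e : bool) (x : k) : Prop :=
  forall y, orbAG q e x y <-> orbG q e x y.

Definition nmult (D : {poly k}) (x : k) : nat := mup x D.

Definition frakA (n : nat) (D : {poly k}) : Prop :=
  [/\ D \is monic, D.[0] != 0, size D = n.+1,
      (forall x : k, x != 0 -> nmult D x^-1 = nmult D x) &
      (~~ odd (nmult D 1) /\ ~~ odd (nmult D (-1)))].

(* R is a system of representatives of the orbits O in Omega'_{alpha,gamma_e}
   with n_O <> 0 (possibly also containing representatives of orbits in Omega'
   with n_O = 0), one per orbit. *)
Definition jrep (q : nat) (e : bool) (D : {poly k}) (R : seq k) : Prop :=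
  [/\ (forall x, x \in R -> ktri x /\ single_orbit q e x),
      (forall i j, (i < size R)%N -> (j < size R)%N ->
          orbAG q e (nth 0 R i) (nth 0 R j) -> i = j) &
      (forall x, ktri x -> single_orbit q e x -> (0 < nmult D x)%N ->
          exists2 y, y \in R & orbAG q e x y)].

Definition jval (D : {poly k}) (R : seq k) : bool :=
  odd (\sum_(x <- R) nmult D x).

End Defs.

From HB Require Import structures.
From mathcomp Require Import all_boot all_order all_algebra zify.
From Stdlib Require Import Relations Classical ClassicalEpsilon.
Set Implicit Arguments.
Unset Strict Implicit.
Unset Printing Implicit Defensive.
Import GRing.Theory.

(* Negation commutes with inversion and with gamma_e, so it permutes the
   orbits of <alpha, gamma_e>.  If a single gamma_e-orbit contains both -x and x^-1,
   then both lie half-way around the gamma_e-cycle of x, so -x = x^-1 and x^2 = -1.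
   Hence the representatives with x^2 <> -1 pair off (x with the representative of
   the orbit of -x) with equal multiplicities and contribute an even amount, while
   {i, -i} is one orbit, which is a single gamma_e-orbit iff e + (q-1)/2 is odd.
   On the other side, the roots of Delta off {1, -1, i, -i} fall into free orbits
   {x, -x, x^-1, -x^-1} of the Klein group, and n_1 = n_-1 is even, so n = 2 n_i
   mod 4 and n (q - (-1)^e) / 4 = n_i (e + (q-1)/2) mod 2. *)

Lemma perm_eq_cat_count_le (T : eqType) (A s : seq T) :
  (forall x, count_mem x A <= count_mem x s) -> exists s', perm_eq s (A ++ s').
Proof.
elim: A s => [|a A IH] s leAs; first by exists s.
have a_s : a \in s.
  by rewrite -has_pred1 has_count; apply: leq_trans (leAs a); rewrite /= eqxx.
have s_rem := perm_to_rem a_s.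
have [s' hs'] : exists s', perm_eq (rem a s) (A ++ s').
  by apply: IH => x; have := leAs x; rewrite (permP s_rem) /=; lia.
by exists s'; rewrite (perm_trans s_rem) //= perm_cons.
Qed.

Lemma dvdn4_size_klein (T : eqType) (f g : T -> T) (s : seq T) :
  involutive f -> involutive g -> f \o g =1 g \o f ->
  {in s, forall x, [/\ f x != x, g x != x & f (g x) != x]} ->
  (forall x, count_mem (f x) s = count_mem x s) ->
  (forall x, count_mem (g x) s = count_mem x s) ->
  4 %| size s.
Proof.
move=> fK gK fgC; have [N] := ubnP (size s).
elim: N s => // N IH [|l s0] // ltN free fs gs.
set s := l :: s0 in ltN free fs gs *.
set A := [:: l; f l; g l; f (g l)].
have [fl gl fgl] := free l (mem_head _ _).
have gfg : g (f (g l)) = f l by rewrite -[g (f _)]fgC /= gK.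
have uniqA : uniq A.
  rewrite /A /= !inE !negb_or andbT !(eq_sym l) fl gl fgl /=.
  rewrite -(inj_eq (inv_inj fK)) fK eq_sym fgl (inj_eq (inv_inj fK)) eq_sym gl /=.
  by rewrite -(inj_eq (inv_inj gK)) gK gfg eq_sym fl.
have memAf x : (f x \in A) = (x \in A).
  rewrite !inE !(inv_eq fK) !fK.
  by case: (x == l); case: (x == f l); case: (x == g l); case: (x == f (g l)).
have memAg x : (g x \in A) = (x \in A).
  rewrite !inE !(inv_eq gK) gK gfg -[g (f l)]fgC /=.
  by case: (x == l); case: (x == f l); case: (x == g l); case: (x == f (g l)).
have countA x : count_mem x A = (x \in A) by rewrite count_uniq_mem.
have count_orbit x : x \in A -> count_mem x s = count_mem l s.
  by rewrite !inE => /or4P [] /eqP ->; rewrite ?fs ?gs.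
have [s' perm_s] : exists s', perm_eq s (A ++ s').
  apply: perm_eq_cat_count_le => x; rewrite countA.
  by case: (boolP (x \in A)) => [/count_orbit ->|]; rewrite /= ?eqxx.
have count_s' x : count_mem x s' = count_mem x s - (x \in A).
  by rewrite (permP perm_s) count_cat countA addKn.
have size_s : size s = 4 + size s' by rewrite (perm_size perm_s) size_cat.
rewrite size_s dvdn_addr //; apply: IH.
- by move: ltN; rewrite size_s; lia.
- by move=> x xs'; apply: free; rewrite (perm_mem perm_s) mem_cat xs' orbT.
- by move=> x; rewrite !count_s' fs memAf.
- by move=> x; rewrite !count_s' gs memAg.
Qed.

Lemma even_sum_free_involution (T : eqType) (f : T -> T) (w : T -> nat) (A : seq T) :
  uniq A -> {in A, forall x, [/\ f x \in A, f x != x, f (f x) = x & w (f x) = w x]} ->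
  ~~ odd (\sum_(x <- A) w x).
Proof.
have [N] := ubnP (size A); elim: N A => // N IH [|x A] ltN; first by rewrite big_nil.
case/andP=> xA uA pairs.
have [fxA fx ffx wfx] := pairs x (mem_head _ _).
have fx_A : f x \in A by move: fxA; rewrite inE (negbTE fx).
rewrite big_cons (big_rem _ fx_A) /= wfx addnA oddD oddD addbb /=.
apply: IH; first by move: ltN; rewrite /= size_rem //; lia.
  exact: rem_uniq.
move=> z; rewrite (mem_rem_uniq _ uA) inE => /andP [zfx zA].
have [fzA fzz ffz wfz] := pairs z (mem_behead (s := x :: A) zA).
have zx : z != x by apply: contraNneq xA => <-.
split=> //; rewrite (mem_rem_uniq _ uA) inE; apply/andP; split.
  by apply: contra zx => /eqP /(congr1 f); rewrite ffz ffx => ->.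
by move: fzA; rewrite inE => /predU1P [fzx|] //; move: zfx; rewrite -fzx ffz eqxx.
Qed.

Lemma count_predU_disjoint (T : Type) (a b : pred T) (s : seq T) :
  (forall x, ~~ (a x && b x)) -> count (predU a b) s = count a s + count b s.
Proof.
move=> ab; rewrite -count_predUI (@eq_count _ (predI a b) pred0) ?count_pred0 ?addn0 //.
by move=> x /=; apply/negbTE.
Qed.

Lemma count_mem_filter (T : eqType) (P : pred T) (s : seq T) (x : T) :
  count_mem x (filter P s) = if P x then count_mem x s else 0.
Proof.
rewrite count_filter; case: ifP => Px.
  by apply: eq_count => y /=; case: eqP => // ->; rewrite Px.
rewrite -(count_pred0 s); apply: eq_count => y /=.
by case: eqP => // ->; rewrite Px.
Qed.

Lemma invariant_off_fixpoint (T : eqType) (U : Type) (w : T -> U) (h : T -> T) (x0 : T) :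
  h x0 = x0 -> (forall x, x != x0 -> w (h x) = w x) -> forall x, w (h x) = w x.
Proof. by move=> hx0 hw x; have [->|/hw] := eqVneq x x0; rewrite ?hx0. Qed.

Lemma clos_rst_map (T : Type) (S S' : relation T) (h : T -> T) a b :
  (forall a b, S a b -> S' (h a) (h b)) ->
  clos_refl_sym_trans T S a b -> clos_refl_sym_trans T S' (h a) (h b).
Proof.
move=> hS; elim=> [u v /hS|u|u v _|u v w _ uv _ vw]; first exact: rst_step.
- exact: rst_refl.
- exact: rst_sym.
- exact: rst_trans uv vw.
Qed.

Lemma clos_rst_inv (T X : Type) (S : relation T) (I : T -> X) a b :
  (forall a b, S a b -> I a = I b) -> clos_refl_sym_trans T S a b -> I a = I b.
Proof. by move=> hS; elim=> [u v /hS|u|u v _|u v w _ -> _ ->]. Qed.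

Lemma iter_half_period_eq (T : eqType) (f : T -> T) (x : T) (a b : nat) :
  (exists2 N, 0 < N & iter N f x = x) ->
  iter a f x != x -> iter (a + a) f x = x ->
  iter b f x != x -> iter (b + b) f x = x ->
  iter a f x = iter b f x.
Proof.
move=> [N N_gt0 fN] fa faa fb fbb.
have exP : exists j, (0 < j) && (iter j f x == x) by exists N; rewrite N_gt0 fN eqxx.
case: (ex_minnP exP) => d /andP [d_gt0 /eqP fd] d_min.
have iter_mod j : iter j f x = iter (j %% d) f x.
  rewrite {1}(divn_eq j d) addnC iterD; congr (iter _ f _).
  by elim: (j %/ d) => // c IH; rewrite mulSn iterD IH fd.
have period_dvd j : iter j f x = x -> d %| j.
  move=> fj; rewrite /dvdn eqn0Ngt; apply/negP => jd_gt0.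
  have := d_min _ (introT andP (conj jd_gt0 (introT eqP _))).
  by rewrite -iter_mod fj leqNgt ltn_mod d_gt0 => /(_ erefl).
have half c : iter c f x != x -> iter (c + c) f x = x -> (c %% d).*2 = d.
  move=> fc /period_dvd; rewrite /dvdn -modnDm -/(dvdn _ _) addnn => /dvdnP [m].
  have cd_gt0 : 0 < c %% d.
    by rewrite lt0n; apply: contra fc; rewrite iter_mod => /eqP ->.
  have := ltn_mod c d; rewrite d_gt0.
  by case: m => [|[|m]] /=; lia.
have ab : a %% d = b %% d by apply: double_inj; rewrite !half.
by rewrite (iter_mod a) (iter_mod b) ab.
Qed.

Lemma odd_quarter_mul (q a c : nat) (e : bool) : odd q ->
  odd (((a.*2 + 4 * c) * (if e then q.+1 else q.-1)) %/ 4) = odd (e + q./2) && odd a.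
Proof.
move=> q_odd; set t := q./2.
have qE : q = t.*2.+1 by rewrite -[LHS]odd_double_half q_odd.
case: e.
- have -> : (a.*2 + 4 * c) * q.+1 = 4 * ((a + c.*2) * t.+1) by rewrite qE; lia.
  by rewrite mulKn // oddM oddD odd_double /= addbF andbC.
- have -> : (a.*2 + 4 * c) * q.-1 = 4 * ((a + c.*2) * t) by rewrite qE; lia.
  by rewrite mulKn // oddM oddD odd_double /= addbF andbC.
Qed.

Local Open Scope ring_scope.

Lemma pchar_odd_two_neq0 (R : nzRingType) (p : nat) :
  p \in [pchar R] -> odd p -> 2%:R != 0 :> R.
Proof.
move=> charRp p_odd; apply/eqP => two0.
have : (2 \in [pchar R])%N by rewrite inE /= two0 eqxx.
by rewrite (pcharf_eq charRp) inE => /eqP p2; rewrite -p2 in p_odd.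
Qed.

Section Representatives.
Variables (k : closedFieldType) (q : nat) (e : bool) (D : {poly k}).

Lemma jrep_uniq R : jrep q e D R -> uniq R.
Proof.
move=> [_ R_free _]; apply/(uniqP 0) => i j iR jR ij.
by apply: R_free => //; rewrite ij; apply: rst_refl.
Qed.

Lemma jrep_eq R x y : jrep q e D R -> x \in R -> y \in R -> orbAG q e x y -> x = y.
Proof.
move=> [_ R_free _] xR yR xy.
have := R_free (index x R) (index y R); rewrite !index_mem !nth_index // => /(_ xR yR xy) idx.
by rewrite -(nth_index 0 xR) idx nth_index.
Qed.

Lemma jrep_exists (s : seq k) :
  (forall x, (0 < nmult D x)%N -> x \in s) -> exists R, jrep q e D R.
Proof.
move=> supp_s.
suff [R [R_orb R_free R_cover]] : exists R : seq k,
    [/\ forall x, x \in R -> ktri x /\ single_orbit q e x,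
        forall i j, (i < size R)%N -> (j < size R)%N ->
          orbAG q e (nth 0 R i) (nth 0 R j) -> i = j &
        forall x, x \in s -> ktri x -> single_orbit q e x ->
          exists2 y, y \in R & orbAG q e x y].
  by exists R; split=> // x kx sx /supp_s /R_cover; apply.
elim: s {supp_s} => [|x s [R [R_orb R_free R_cover]]]; first by exists [::].
have [[kx [sx x_new]] | x_old] :=
  classic (ktri x /\ single_orbit q e x /\ ~ exists2 y, y \in R & orbAG q e x y).
- exists (x :: R); split.
  + by move=> z; rewrite inE => /predU1P [->|/R_orb].
  + move=> [|i] [|j] //= ltiR ltjR ij.
    * by case: x_new; exists (nth 0 R j) => //; apply: mem_nth.
    * by case: x_new; exists (nth 0 R i); [apply: mem_nth | apply: rst_sym].
    * by congr S; apply: R_free.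
  + move=> z; rewrite inE => /predU1P [-> _ _|zs kz sz].
      by exists x; rewrite ?mem_head //; apply: rst_refl.
    by have [y yR zy] := R_cover z zs kz sz; exists y; rewrite // inE yR orbT.
- exists R; split=> // z; rewrite inE => /predU1P [-> kx sx|]; last exact: R_cover.
  by apply: NNPP => x_new; apply: x_old.
Qed.

End Representatives.

Section OddCharacteristic.
Variable k : closedFieldType.
Hypothesis two_neq0 : 2%:R != 0 :> k.

Lemma oppr_neq (x : k) : x != 0 -> - x != x.
Proof.
move=> x0; apply: contra two_neq0 => /eqP xN.
have : x *+ 2 == 0 by rewrite mulr2n -{1}xN addNr.
by rewrite -(mulr_natr x) mulf_eq0 (negbTE x0).
Qed.

Lemma sqr_eqN1_neq0 (x : k) : x ^+ 2 = -1 -> x != 0.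
Proof.
by move=> x2; apply: contra_eq_neq x2 => ->; rewrite expr0n eq_sym oppr_eq0 oner_eq0.
Qed.

Lemma sqr_eqN1_inv (x : k) : x ^+ 2 = -1 -> x^-1 = - x.
Proof.
move=> x2; apply: (mulfI (sqr_eqN1_neq0 x2)).
by rewrite mulfV ?sqr_eqN1_neq0 // mulrN -expr2 x2 opprK.
Qed.

Lemma oner_neqN1 : 1 != -1 :> k.
Proof. by apply: contra two_neq0 => /eqP one_N1; rewrite -[2%:R]/(1 + 1) {1}one_N1 addNr. Qed.

Lemma sqr_eqN1_ktri (x : k) : x ^+ 2 = -1 -> ktri x.
Proof.
move=> x2; split; first exact: sqr_eqN1_neq0.
  by apply: contra_eq_neq x2 => ->; rewrite expr1n oner_neqN1.
by apply: contra_eq_neq x2 => ->; rewrite sqrrN expr1n oner_neqN1.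
Qed.

Lemma ktri_opp (x : k) : ktri x -> ktri (- x).
Proof. by case=> x0 x1 xN1; split; rewrite ?oppr_eq0 // eqr_oppLR // opprK. Qed.

Lemma size_roots_mod4 (s : seq k) (i : k) : i ^+ 2 = -1 -> 0 \notin s ->
  (forall x, count_mem x^-1 s = count_mem x s) ->
  (forall x, count_mem (- x) s = count_mem x s) ->
  ~~ odd (count_mem 1 s) ->
  exists c, size s = ((count_mem i s).*2 + 4 * c)%N.
Proof.
move=> i2 s_neq0 sV sN even1.
have count_sqr1 : count [pred x : k | x ^+ 2 == 1] s = (count_mem 1 s).*2.
  rewrite (eq_count (a2 := predU (pred1 1) (pred1 (-1))) (@sqrf_eq1 k)).
  rewrite count_predU_disjoint ?sN ?addnn // => x /=.
  by apply/andP => -[/eqP -> /eqP]; apply/eqP; rewrite oner_neqN1.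
have count_sqrN1 : count [pred x : k | x ^+ 2 == -1] s = (count_mem i s).*2.
  have sqrN1E x : (x ^+ 2 == -1) = (x == i) || (x == - i) by rewrite -i2 eqf_sqr.
  rewrite (eq_count (a2 := predU (pred1 i) (pred1 (- i))) sqrN1E).
  rewrite count_predU_disjoint ?sN ?addnn // => x /=.
  by apply/andP => -[/eqP -> /eqP /esym]; apply/eqP; rewrite oppr_neq ?sqr_eqN1_neq0.
pose unit4 := predU [pred x : k | x ^+ 2 == 1] [pred x : k | x ^+ 2 == -1].
have /dvdnP [c count_generic] : (4 %| count (predC unit4) s)%N.
  rewrite -size_filter; apply: (dvdn4_size_klein (f := -%R) (g := GRing.inv)).
  - exact: opprK.
  - exact: invrK.
  - by move=> x /=; rewrite invrN.
  - move=> x; rewrite mem_filter /= negb_or => /andP [/andP [x2_1 x2_N1] xs].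
    have x0 : x != 0 by apply: contraNneq s_neq0 => <-.
    have invE y : (x^-1 == y) = (y * x == 1).
      by apply/eqP/eqP => [<-|yx]; rewrite ?mulVf // -(mulfK x0 y) yx mul1r.
    by rewrite oppr_neq // eqr_oppLR !invE ?mulNr -expr2 ?eqr_oppLR x2_1 x2_N1.
  - by move=> x; rewrite !count_mem_filter /= sqrrN sN.
  - by move=> x; rewrite !count_mem_filter /= exprVn invr_eq1 (inv_eq invrK) invrN1 sV.
have half1 := odd_double_half (count_mem 1 s); rewrite (negbTE even1) add0n in half1.
exists (c + (count_mem 1%R s)./2)%N.
rewrite -(count_predC unit4) count_predU_disjoint ?count_sqr1 ?count_sqrN1 ?count_generic.
  by move: half1; lia.
by move=> x /=; apply/andP => -[/eqP -> /eqP]; apply/eqP; rewrite oner_neqN1.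
Qed.

End OddCharacteristic.

Lemma frakA_roots (k : closedFieldType) (n : nat) (D : {poly k}) : frakA n D ->
  exists s : seq k, [/\ size s = n, 0 \notin s & forall x, nmult D x = count_mem x s].
Proof.
case=> D_monic D0 size_D _ _.
have [s Ds] := closed_field_poly_normal D; rewrite (monicP D_monic) scale1r in Ds.
exists s; split.
- by move: size_D; rewrite Ds size_prod_XsubC => -[].
- by rewrite -root_prod_XsubC -Ds /root (negbTE D0).
- by move=> x; rewrite /nmult Ds mu_prod_XsubC.
Qed.

Section GammaOrbits.
Variables (k : closedFieldType) (q : nat) (e : bool).
Hypotheses (q_odd : odd q) (two_neq0 : 2%:R != 0 :> k).
Hypothesis frob_periodic : forall x : k, exists2 r : nat, (0 < r)%N & x ^+ (q ^ r) = x.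

Local Notation g := (@gam k q e).

Lemma signr_q : (-1) ^+ q = -1 :> k.
Proof. by rewrite -signr_odd q_odd. Qed.

Lemma gamN x : g (- x) = - g x.
Proof. by rewrite /gam (exprNn x) signr_q mulrCA mulN1r. Qed.

Lemma gamV x : g x^-1 = (g x)^-1.
Proof. by rewrite /gam invfM exprVn; case: e; rewrite ?invrN1 ?invr1. Qed.

Lemma iter_gamN r x : iter r g (- x) = - iter r g x.
Proof. by elim: r => //= r ->; rewrite gamN. Qed.

Lemma iter_gamV r x : iter r g x^-1 = (iter r g x)^-1.
Proof. by elim: r => //= r ->; rewrite gamV. Qed.

Lemma iter_gam r x : iter r g x = (-1) ^+ (e * r) * x ^+ (q ^ r).
Proof.
elim: r => [|r IH]; first by rewrite muln0 mul1r expn0 expr1.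
rewrite iterS IH /gam exprMn -!exprM -expnSr mulrA -exprD -signr_odd -[in RHS]signr_odd.
by rewrite oddD !oddM q_odd andbT /=; case: e; rewrite //= addbT.
Qed.

Lemma gam_periodic x : exists2 N, (0 < N)%N & iter N g x = x.
Proof.
have [r r_gt0 xr] := frob_periodic x; exists (r + r)%N; first by rewrite addn_gt0 r_gt0.
by rewrite iter_gam expnD (exprM x) xr xr -signr_odd oddM oddD addbb andbF mul1r.
Qed.

Lemma orbG_iter (x y : k) : orbG q e x y -> exists r, y = iter r g x.
Proof.
elim=> [a _ ->|a|a b _ [r ->]|a b c _ [r ->] _ [r' ->]]; first by exists 1%N.
- by exists 0%N.
- have [N N_gt0 aN] := gam_periodic a; exists (N.-1 * r)%N.
  rewrite -iterD -mulSnr prednK //.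
  by elim: r => [|r IH]; rewrite ?muln0 // mulnS iterD -IH aN.
- by exists (r' + r)%N; rewrite iterD.
Qed.

Lemma orbG_orbAG (x y : k) : orbG q e x y -> orbAG q e x y.
Proof. by apply: (@clos_rst_map _ _ _ id) => u v ->; right. Qed.

Lemma orbAG_opp (x y : k) : orbAG q e x y -> orbAG q e (- x) (- y).
Proof.
by apply: clos_rst_map => u v [->|->]; [left; rewrite invrN | right; rewrite gamN].
Qed.

Lemma orbG_opp (x y : k) : orbG q e x y -> orbG q e (- x) (- y).
Proof. by apply: clos_rst_map => u v ->; rewrite gamN. Qed.

Lemma single_orbit_opp (x : k) : single_orbit q e x -> single_orbit q e (- x).
Proof.
move=> sx y; split; last exact: orbG_orbAG.
by move=> /orbAG_opp; rewrite opprK => /sx /orbG_opp; rewrite opprK.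
Qed.

Lemma expq_eqN1 (c : k) : c ^+ q = -1 -> c = -1.
Proof.
move=> cq; have [[|r] // _ <-] := frob_periodic c.
by rewrite expnS exprM cq -signr_odd oddX q_odd orbT.
Qed.

Lemma orbAG_sqr_eqN1 (x y : k) : orbAG q e x y -> (x ^+ 2 == -1) = (y ^+ 2 == -1).
Proof.
apply: (@clos_rst_inv _ _ _ (fun z : k => z ^+ 2 == -1)) => u v [->|->].
  by rewrite exprVn (inv_eq invrK) invrN1.
rewrite /gam exprMn sqrr_sign mul1r -exprM mulnC exprM.
by apply/eqP/eqP => [-> | /expq_eqN1]; rewrite ?signr_q.
Qed.

(* [-x] and [x^-1] both sit half-way around the [gam]-cycle of [x], so they coincide. *)
Lemma orbG_opp_inv_sqr (x : k) :
  ktri x -> orbG q e x (- x) -> orbG q e x x^-1 -> x ^+ 2 = -1.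
Proof.
move=> [x0 x1 xN1] /orbG_iter [a xa] /orbG_iter [b xb].
have xVx : x^-1 != x.
  apply/eqP => xVx; have : x ^+ 2 == 1 by rewrite expr2 -{1}xVx mulVf.
  by rewrite sqrf_eq1 (negbTE x1) (negbTE xN1).
have : - x = x^-1.
  rewrite xa xb; apply: iter_half_period_eq (gam_periodic x) _ _ _ _.
  - by rewrite -xa oppr_neq.
  - by rewrite iterD -xa iter_gamN -xa opprK.
  - by rewrite -xb.
  - by rewrite iterD -xb iter_gamV -xb invrK.
by move/(congr1 (fun y => - y * x)); rewrite opprK mulNr mulVf // -expr2.
Qed.

Lemma gam_sqr_eqN1 (x : k) : x ^+ 2 = -1 -> g x = (-1) ^+ (e + q./2) * x.
Proof.
move=> x2; rewrite /gam -{1}(odd_double_half q) q_odd -mul2n exprS exprM x2.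
by rewrite exprD -mulrA [x * _]mulrC.
Qed.

Lemma single_orbit_sqr_eqN1 (x : k) :
  x ^+ 2 = -1 -> single_orbit q e x <-> odd (e + q./2).
Proof.
move=> x2; split=> [sx | odd_eq y].
  have /sx /orbG_iter [r xr] : orbAG q e x (- x).
    by apply: rst_step; left; rewrite sqr_eqN1_inv.
  apply/negPn/negP => even_eq.
  have gx : g x = x by rewrite gam_sqr_eqN1 // -signr_odd (negbTE even_eq) mul1r.
  have : iter r g x = x by elim: r {xr} => //= r ->.
  by move/eqP; rewrite -xr (negbTE (oppr_neq two_neq0 (sqr_eqN1_neq0 x2))).
split; last exact: orbG_orbAG.
move=> /orbAG_sqr_eqN1; rewrite x2 eqxx -x2 => /esym; rewrite eqf_sqr.
case/orP=> /eqP ->; first exact: rst_refl.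
by apply: rst_step; rewrite gam_sqr_eqN1 // -signr_odd odd_eq mulN1r.
Qed.

Lemma orbAG_invariant (w : k -> nat) :
  (forall x, w x^-1 = w x) -> (forall x, w (- x) = w x) ->
  (forall x, w (x ^+ q) = w x) ->
  forall x y, orbAG q e x y -> w y = w x.
Proof.
move=> wV wN wq x y /(@clos_rst_inv _ _ _ w) -> // u v [->|->]; first by rewrite wV.
by rewrite /gam; case: e; rewrite ?mul1r ?mulN1r ?wN wq.
Qed.

Section RepresentativeSums.
Variables (D : {poly k}) (R : seq k).
Hypothesis D_inv : forall x : k, nmult D x^-1 = nmult D x.
Hypothesis D_opp : forall x : k, nmult D (- x) = nmult D x.
Hypothesis D_frob : forall x : k, nmult D (x ^+ q) = nmult D x.
Hypothesis R_rep : jrep q e D R.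

(* Off the square roots of [-1], the representative of the orbit of [-x] is a
   partner of [x] in [R] distinct from [x]. *)
Lemma even_jsum_sqr_neqN1 : ~~ odd (\sum_(x <- R | x ^+ 2 != -1) nmult D x).
Proof.
have [R_orb _ R_cover] := R_rep.
rewrite (bigID (fun x => 0 < nmult D x)%N) /= [X in (_ + X)%N]big1 ?addn0; last first.
  by move=> x /andP [_]; rewrite lt0n negbK => /eqP.
rewrite -big_filter.
set A := [seq x <- R | _].
pose opp_rep x y := y \in R /\ orbAG q e (- x) y.
pose partner x := epsilon (inhabits 0) (opp_rep x).
have partnerP x : x \in A -> partner x \in R /\ orbAG q e (- x) (partner x).
  rewrite mem_filter => /andP [/andP [_ x_pos] xR]; apply: (epsilon_spec _ (opp_rep x)).
  have [kx sx] := R_orb x xR.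
  have [|y yR xy] := R_cover (- x) (ktri_opp kx) (single_orbit_opp sx).
    by rewrite D_opp.
  by exists y.
apply: (even_sum_free_involution (f := partner)).
  by rewrite filter_uniq ?(jrep_uniq R_rep).
move=> x xA; have [pxR xpx] := partnerP x xA.
move: (xA); rewrite mem_filter => /andP [/andP [x2 x_pos] xR].
have [[x0 x1 xN1] sx] := R_orb x xR.
have nmult_px : nmult D (partner x) = nmult D x.
  by rewrite (orbAG_invariant D_inv D_opp D_frob xpx) D_opp.
have pxA : partner x \in A.
  by rewrite mem_filter pxR nmult_px x_pos -(orbAG_sqr_eqN1 xpx) sqrrN x2.
split=> //.
- apply: contra x2 => /eqP px_x; apply/eqP/orbG_opp_inv_sqr => //.
    by apply/sx/rst_sym; rewrite -{2}px_x.
  by apply/sx/rst_step; left.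
- have [ppxR pxppx] := partnerP _ pxA.
  apply: esym (jrep_eq R_rep xR ppxR _).
  by apply: rst_trans pxppx; move/orbAG_opp: xpx; rewrite opprK.
Qed.

Lemma odd_jsum_sqr_eqN1 (i : k) : i ^+ 2 = -1 ->
  odd (\sum_(x <- R | x ^+ 2 == -1) nmult D x) = odd (e + q./2) && odd (nmult D i).
Proof.
move=> i2; have [R_orb _ R_cover] := R_rep.
have nmult_sqrN1 x : x ^+ 2 == -1 -> nmult D x = nmult D i.
  by rewrite -i2 eqf_sqr => /orP [] /eqP ->; rewrite ?D_opp.
have [i0 | i_pos] := posnP (nmult D i).
  by rewrite big1 ?i0 ?andbF // => x /nmult_sqrN1 ->.
case odd_eq: (odd (e + q./2)); last first.
  rewrite big1_seq // => x /andP [/eqP x2 xR].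
  by have [_ /(single_orbit_sqr_eqN1 x2)] := R_orb x xR; rewrite odd_eq.
have single_i := proj2 (single_orbit_sqr_eqN1 i2) odd_eq.
have [y yR iy] := R_cover i (sqr_eqN1_ktri two_neq0 i2) single_i i_pos.
have y2 : y ^+ 2 == -1 by rewrite -(orbAG_sqr_eqN1 iy) i2.
rewrite (big_rem _ yR) y2 (nmult_sqrN1 y y2) /= big1_seq ?addn0 //.
move=> x /andP [/eqP x2]; rewrite (mem_rem_uniq _ (jrep_uniq R_rep)) inE.
case/andP=> /eqP xy xR; case: xy; apply: (jrep_eq R_rep xR yR).
have : x ^+ 2 == y ^+ 2 by rewrite x2 (eqP y2).
rewrite eqf_sqr => /orP [] /eqP ->; first exact: rst_refl.
by apply: rst_step; left; rewrite sqr_eqN1_inv ?opprK // sqrrN; apply/eqP.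
Qed.

End RepresentativeSums.

Lemma jval_frakA (n : nat) (D : {poly k}) (R : seq k) : frakA n D ->
  (forall x, x != 0 -> nmult D (- x) = nmult D x) ->
  (forall x, x != 0 -> nmult D (x ^+ q) = nmult D x) ->
  jrep q e D R -> jval D R = odd ((n * (if e then q.+1 else q.-1)) %/ 4).
Proof.
move=> hD D_opp D_frob R_rep; have [_ _ _ D_inv [even1 _]] := hD.
have nmultV := invariant_off_fixpoint (invr0 k) D_inv.
have nmultN := invariant_off_fixpoint (oppr0 k) D_opp.
have nmultX : forall x, nmult D (x ^+ q) = nmult D x.
  by apply: (invariant_off_fixpoint _ D_frob); rewrite expr0n; case: (q) q_odd.
have [s [size_s s0 nmultE]] := frakA_roots hD.
have sV x : count_mem x^-1 s = count_mem x s by rewrite -!nmultE nmultV.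
have sN x : count_mem (- x) s = count_mem x s by rewrite -!nmultE nmultN.
have even1_s : ~~ odd (count_mem 1 s) by rewrite -nmultE.
have [i i2] := imaginary_exists k.
have [c size_c] := size_roots_mod4 two_neq0 i2 s0 sV sN even1_s.
rewrite /jval (bigID (fun x => x ^+ 2 == -1)) /= oddD.
rewrite (odd_jsum_sqr_eqN1 nmultN R_rep i2).
rewrite (negbTE (even_jsum_sqr_neqN1 nmultV nmultN nmultX R_rep)).
by rewrite addbF -size_s size_c -nmultE odd_quarter_mul.
Qed.

End GammaOrbits.

Theorem mainTheorem7
  (k : closedFieldType) (p m q : nat)
  (hp : prime p) (hchar : p \in [pchar k]) (hm : (0 < m)%N) (hq : q = (p ^ m)%N)
  (hqodd : odd q)
  (halg : forall x : k, exists2 r : nat, (0 < r)%N & x ^+ (q ^ r) = x)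
  (e : bool) (n : nat) (hn : ~~ odd n) (D : {poly k})
  (hD : frakA n D)
  (hneg : forall x : k, x != 0 -> nmult D (- x) = nmult D x)
  (hfrob : forall x : k, x != 0 -> nmult D (x ^+ q) = nmult D x) :
  (exists R : seq k, jrep q e D R) /\
  (forall R : seq k, jrep q e D R ->
     jval D R = odd ((n * (if e then q.+1 else q.-1)) %/ 4)).
Proof.
have two_neq0 : 2%:R != 0 :> k.
  by apply: (pchar_odd_two_neq0 hchar); move: hqodd; rewrite hq oddX eqn0Ngt hm.
split; last by move=> R; apply: jval_frakA.
have [s [_ _ nmultE]] := frakA_roots hD.
by apply: (@jrep_exists _ q e D s) => x; rewrite nmultE -has_pred1 has_count.
Qed.
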